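(* Let $R$ be a commutative Noetherian ring, $M$ a faithful primeful $R$-module having at least one prime submodule, $X=\mathrm{Spec}(M)$, $N$ an $R$-module, $K\le M$, and $U=X\setminus V(K)$. Then the cokernel of $\epsilon_N^U:N\to\mathcal{A}(N,M)(U)$ is $(K:M)$-torsion.
   Context: For a submodule $L$ of an $R$-module $M$, $(L:M)=\{r\in R\mid rM\subseteq L\}$. A submodule $P$ of $M$ is prime if $P\neq M$ and whenever $rm\in P$ ($r\in R$, $m\in M$) then $r\in (P:M)$ or $m\in P$. $\mathrm{Spec}(M)$ is the set of prime submodules. $M$ is faithful if $\mathrm{Ann}_R(M)=0$; primeful if $M=0$ or $\mathrm{Spec}(M)\to\mathrm{Spec}(R/\mathrm{Ann}(M))$, $P\mapsto(P:M)/\mathrm{Ann}(M)$, is surjective. For $L\le M$, $V(L)=\{P\in X\mid (P:M)\supseteq (L:M)\}$; these are the closed sets of the Zariski topology. For open $U\subseteq X$, $\mathrm{Supp}(U)=\{(P:M)\mid P\in U\}$. $\mathcal{A}(N,M)(U)$ is the $R$-module of families $(\gamma_{\mathfrak p})_{\mathfrak p\in\mathrm{Supp}(U)}\in\prod_{\mathfrak p\in\mathrm{Supp}(U)}N_{\mathfrak p}$ such that for each $Q\in U$ there exist an open neighbourhood $W\subseteq U$ of $Q$ and $s\in R$, $m\in N$ with $s\notin(P:M)$ and $\gamma_{(P:M)}=m/s$ for every $P\in W$. $\epsilon_N^U(n)=(n/1)_{\mathfrak p\in\mathrm{Supp}(U)}$. A module $H$ is $I$-torsion if every element is annihilated by some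 power of $I$. *)

From HB Require Import structures.
From mathcomp Require Import all_boot all_order all_algebra.
Set Implicit Arguments. Unset Strict Implicit. Unset Printing Implicit Defensive.
Import GRing.Theory.
Local Open Scope ring_scope.

Section ModuleDefs.
Variable R : comPzRingType.

Definition ideal (I : R -> Prop) : Prop :=
  I 0 /\ (forall x y, I x -> I y -> I (x + y)) /\ (forall r x, I x -> I (r * x)).

Definition prime_ideal (p : R -> Prop) : Prop :=
  ideal p /\ ~ p 1 /\ (forall r s, p (r * s) -> p r \/ p s).

Definition fin_gen_ideal (I : R -> Prop) : Prop :=
  exists s : seq R, forall x,
    I x <-> exists c : seq R, size c = size s /\
                              x = \sum_(i < size s) c`_i * s`_i.

Definition noetherian_ring : Prop :=
  forall I : R -> Prop, ideal I -> fin_gen_ideal I.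

Definition ideal_mul (I J : R -> Prop) (x : R) : Prop :=
  exists s : seq (R * R),
    (forall q, q \in s -> I q.1 /\ J q.2) /\ x = \sum_(q <- s) q.1 * q.2.

Fixpoint ideal_pow (I : R -> Prop) (k : nat) : R -> Prop :=
  match k with
  | 0 => fun _ => True
  | k'.+1 => ideal_mul I (ideal_pow I k')
  end.

Variable M : lmodType R.

Definition submodule (L : M -> Prop) : Prop :=
  L 0 /\ (forall x y, L x -> L y -> L (x + y)) /\ (forall r x, L x -> L (r *: x)).

Definition colon (L : M -> Prop) (r : R) : Prop := forall m : M, L (r *: m).

Definition annihilator (r : R) : Prop := forall m : M, r *: m = 0.

Definition prime_submodule (P : M -> Prop) : Prop :=
  submodule P /\ (exists m, ~ P m) /\
  (forall (r : R) (m : M), P (r *: m) -> colon P r \/ P m).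

Definition faithful : Prop := forall r : R, annihilator r -> r = 0.

(* primeful: M = 0, or P |-> (P:M)/Ann(M) is onto Spec(R/Ann(M)); the prime
   ideals of R/Ann(M) are the q/Ann(M) with q a prime ideal of R containing
   Ann(M) *)
Definition primeful : Prop :=
  (forall m : M, m = 0) \/
  (forall q : R -> Prop, prime_ideal q -> (forall r, annihilator r -> q r) ->
     exists P, prime_submodule P /\ forall r, colon P r <-> q r).

Definition Vset (L : M -> Prop) (P : M -> Prop) : Prop :=
  prime_submodule P /\ (forall r, colon L r -> colon P r).

Definition zariski_open (W : (M -> Prop) -> Prop) : Prop :=
  (forall P, W P -> prime_submodule P) /\
  exists L, submodule L /\ forall P, W P <-> (prime_submodule P /\ ~ Vset L P).

Definition Supp (U : (M -> Prop) -> Prop) (p : R -> Prop) : Prop :=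
  exists P, U P /\ p = colon P.

Variable N : lmodType R.

(* An element of the localization N_p is represented by a fraction (m, s) with
   s ∉ p; two fractions are equal in N_p iff u (s' m - s m') = 0 for some
   u ∉ p. *)
Definition loc_eq (p : R -> Prop) (x y : N * R) : Prop :=
  exists u : R, ~ p u /\ u *: (y.2 *: x.1 - x.2 *: y.1) = 0.

(* A family (γ_p)_{p ∈ Supp U} is represented by a function γ giving, for each
   p, a representing fraction γ p of γ_p ∈ N_p. *)
Definition A_section (U : (M -> Prop) -> Prop) (g : (R -> Prop) -> N * R) : Prop :=
  (forall p, Supp U p -> ~ p (g p).2) /\
  (forall Q, U Q ->
     exists W, zariski_open W /\ (forall P, W P -> U P) /\ W Q /\
       exists (s : R) (m : N), forall P, W P ->
         ~ colon P s /\ loc_eq (colon P) (g (colon P)) (m, s)).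

Definition fam_scale (r : R) (g : (R -> Prop) -> N * R) : (R -> Prop) -> N * R :=
  fun p => (r *: (g p).1, (g p).2).

Definition in_image_eps (U : (M -> Prop) -> Prop) (g : (R -> Prop) -> N * R) : Prop :=
  exists n : N, forall p, Supp U p -> loc_eq p (g p) (n, 1).

Definition coker_eps_torsion (I : R -> Prop) (U : (M -> Prop) -> Prop) : Prop :=
  forall g, A_section U g ->
    exists k : nat, forall r, ideal_pow I k r -> in_image_eps U (fam_scale r g).

End ModuleDefs.

(* Write D(F) for the primes P with F outside (P:M).  A section g over
   U = X \ V(K) is locally a fraction G/F on such basic opens.  As R is
   Noetherian and every prime ideal of R has the form (P:M), Krull's lemma
   shows that x lies in every (P:M) containing an ideal a only if some power
   of x lies in a.  Consequently U is quasi-compact: finitely many fractions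
   G_i/F_i represent g on sets D(F_i) covering U, and any two of them agree
   after multiplication by one fixed power (F_i F_j)^C.  Then F_i^(C+1) g is
   the image of F_i^C G_i under epsilon, each generator of (K:M) has a power
   in the ideal of such multipliers, and a pigeonhole count gives a power of
   (K:M) mapping g into the image of epsilon. *)

From mathcomp Require Import all_boot all_order all_algebra ring zify.
From Stdlib Require Import Classical ClassicalEpsilon.
Set Implicit Arguments. Unset Strict Implicit. Unset Printing Implicit Defensive.
Import GRing.Theory.
Local Open Scope ring_scope.

Lemma exists_uniform_bound (T : eqType) (Q : nat -> T -> Prop) (s : seq T) :
  (forall n m y, (n <= m)%N -> Q n y -> Q m y) ->
  (forall y, y \in s -> exists n, Q n y) -> exists n, forall y, y \in s -> Q n y.
Proof.
move=> mono; elim: s => [|a s IH] hs; first by exists 0%N.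
have [n Qa] := hs a (mem_head _ _).
have [m Qs] : exists m, forall y, y \in s -> Q m y.
  by apply: IH => y ys; apply: hs; rewrite inE ys orbT.
exists (maxn n m) => y; rewrite inE => /orP [/eqP -> | ys].
  exact: mono (leq_maxl n m) Qa.
exact: mono (leq_maxr n m) (Qs y ys).
Qed.

Lemma exists_common_list (A T : eqType) (D : T -> Prop) (Q : A -> seq T -> Prop)
    (s : seq A) :
  (forall y l l', {subset l <= l'} -> Q y l -> Q y l') ->
  (forall y, y \in s -> exists l, (forall t, t \in l -> D t) /\ Q y l) ->
  exists l, (forall t, t \in l -> D t) /\ forall y, y \in s -> Q y l.
Proof.
move=> mono; elim: s => [|a s IH] hs; first by exists [::].
have [la [laD Qa]] := hs a (mem_head _ _).
have [l [lD Ql]] : exists l, (forall t, t \in l -> D t) /\ forall y, y \in s -> Q y l.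
  by apply: IH => y ys; apply: hs; rewrite inE ys orbT.
exists (la ++ l); split => [t | y]; first by rewrite mem_cat => /orP [/laD | /lD].
rewrite inE => /orP [/eqP -> | ys].
  by apply: mono Qa => t tla; rewrite mem_cat tla.
by apply: mono (Ql y ys) => t tl; rewrite mem_cat tl orbT.
Qed.

Section Ideals.
Variable R : comPzRingType.
Implicit Types (I J a p : R -> Prop) (x y : R).

Lemma ideal0 I : ideal I -> I 0. Proof. by case. Qed.

Lemma idealD I x y : ideal I -> I x -> I y -> I (x + y).
Proof. by case=> _ [+ _]; apply. Qed.

Lemma idealMl I r x : ideal I -> I x -> I (r * x).
Proof. by case=> _ [_ +]; apply. Qed.

Lemma idealMr I r x : ideal I -> I x -> I (x * r).
Proof. by move=> hI Ix; rewrite mulrC; apply: idealMl. Qed.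

Lemma ideal_exprn_le I x m n : ideal I -> (m <= n)%N -> I (x ^+ m) -> I (x ^+ n).
Proof. by move=> hI /subnK <- Ixm; rewrite exprD; apply: idealMl. Qed.

Lemma ideal_sum I (T : Type) (s : seq T) (P : pred T) (F : T -> R) :
  ideal I -> (forall t, P t -> I (F t)) -> I (\sum_(t <- s | P t) F t).
Proof. by move=> hI; apply: (big_ind I (ideal0 hI) (fun x y => @idealD I x y hI)). Qed.

Lemma ideal_sum_notin I (T : eqType) (s : seq T) (F : T -> R) :
  ideal I -> ~ I (\sum_(t <- s) F t) -> exists2 t, t \in s & ~ I (F t).
Proof.
move=> hI hs; apply: NNPP => hno; apply: hs; rewrite big_seq.
by apply: ideal_sum => // t ts; apply: NNPP => hnt; apply: hno; exists t.
Qed.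

Lemma ideal_principal x : ideal (fun y => exists c, y = c * x).
Proof.
split; first by exists 0; rewrite mul0r.
split; first by move=> _ _ [c ->] [d ->]; exists (c + d); rewrite mulrDl.
by move=> r _ [c ->]; exists (r * c); rewrite mulrA.
Qed.

Definition ideal_span (T : eqType) (D : T -> Prop) (den : T -> R) (y : R) : Prop :=
  exists l : seq (R * T),
    (forall t, t \in l -> D t.2) /\ y = \sum_(t <- l) t.1 * den t.2.

Lemma ideal_span_ideal (T : eqType) (D : T -> Prop) (den : T -> R) :
  ideal (ideal_span D den).
Proof.
split; first by exists [::]; rewrite big_nil.
split=> [_ _ [l [lD ->]] [l' [l'D ->]] | r _ [l [lD ->]]].
  exists (l ++ l'); split; last by rewrite big_cat.
  by move=> t; rewrite mem_cat => /orP [/lD | /l'D].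
exists [seq (r * t.1, t.2) | t <- l]; split; first by move=> _ /mapP [t /lD ? ->].
by rewrite big_map mulr_sumr; apply: eq_bigr => t _; rewrite mulrA.
Qed.

Lemma ideal_span_mem (T : eqType) (D : T -> Prop) (den : T -> R) t :
  D t -> ideal_span D den (den t).
Proof.
by exists [:: (1, t)]; split => [_ /[!inE] /eqP -> //|]; rewrite big_seq1 mul1r.
Qed.

Lemma ideal_add_principal J w : ideal J -> ideal (fun y => exists j r, J j /\ y = j + r * w).
Proof.
move=> hJ; split; first by exists 0, 0; rewrite mul0r addr0; split => //; apply: ideal0.
split=> [_ _ [j [r [Jj ->]]] [j' [r' [Jj' ->]]] | s _ [j [r [Jj ->]]]].
  by exists (j + j'), (r + r'); split; [apply: idealD | ring].
by exists (s * j), (s * r); split; [apply: idealMl | ring].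
Qed.

Lemma prime_ideal_notM p x y : prime_ideal p -> ~ p x -> ~ p y -> ~ p (x * y).
Proof. by case=> _ [_ pM] px py /pM []. Qed.

Lemma prime_ideal_notX p x n : prime_ideal p -> ~ p x -> ~ p (x ^+ n).
Proof.
move=> pp px; elim: n => [|n IH]; first by rewrite expr0; case: pp => _ [].
by rewrite exprS; apply: prime_ideal_notM.
Qed.

Lemma fin_gen_ideal_mem I (s : seq R) :
  (forall x, I x <-> exists c : seq R, size c = size s /\
                                      x = \sum_(i < size s) c`_i * s`_i) ->
  forall y, y \in s -> I y.
Proof.
move=> hs _ /(nthP 0) [i si <-]; apply/hs.
exists [seq (j == i)%:R | j <- iota 0 (size s)]; split; first by rewrite size_map size_iota.
rewrite (bigD1 (Ordinal si)) //= big1 => [|j /negbTE ji].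
  by rewrite (nth_map 0%N) ?size_iota // nth_iota // eqxx mul1r addr0.
by rewrite (nth_map 0%N) ?size_iota // nth_iota // add0n -[_ == i]/(j == Ordinal si) ji mul0r.
Qed.

Lemma noetherian_chain_stationary (c : nat -> R -> Prop) : noetherian_ring R ->
  (forall n, ideal (c n)) -> (forall n r, c n r -> c n.+1 r) ->
  exists n, forall r, c n.+1 r -> c n r.
Proof.
move=> noeth cI cS.
have cmono m n r : (m <= n)%N -> c m r -> c n r.
  by move=> /subnK <-; elim: (n - m)%N => // k IH /IH /cS.
have union_ideal : ideal (fun r => exists n, c n r).
  split; first by exists 0%N; apply: ideal0.
  split=> [x y [n cx] [m cy] | r x [n cx]]; last by exists n; apply: idealMl.
  exists (maxn n m); apply: idealD => //.
    exact: cmono (leq_maxl n m) cx.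
  exact: cmono (leq_maxr n m) cy.
have [s hs] := noeth _ union_ideal.
have [n cn] : exists n, forall y, y \in s -> c n y.
  apply: exists_uniform_bound => [n m y|]; first exact: cmono.
  exact: fin_gen_ideal_mem hs.
exists n => r cr; have [d [_ ->]] := (hs r).1 (ex_intro _ n.+1 cr).
by apply: ideal_sum => // i _; apply: idealMl => //; apply: cn; apply: mem_nth.
Qed.

Lemma noetherian_maximal (S : (R -> Prop) -> Prop) J0 : noetherian_ring R ->
  (forall J, S J -> ideal J) -> S J0 ->
  exists J, S J /\ forall J', S J' -> (forall r, J r -> J' r) -> forall r, J' r -> J r.
Proof.
move=> noeth SI SJ0; apply: NNPP => hno.
have grow J : S J ->
    exists J', S J' /\ (forall r, J r -> J' r) /\ exists r, J' r /\ ~ J r.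
  move=> SJ; apply: NNPP => hn; apply: hno; exists J; split => // J' SJ' JJ' r J'r.
  by apply: NNPP => Jr; apply: hn; exists J'; do !split => //; exists r.
pose step J := match excluded_middle_informative (S J) with
  | left SJ => proj1_sig (constructive_indefinite_description _ (grow J SJ))
  | right _ => J end.
have stepP J : S J ->
    S (step J) /\ (forall r, J r -> step J r) /\ exists r, step J r /\ ~ J r.
  rewrite /step; case: excluded_middle_informative => // SJ _.
  by case: constructive_indefinite_description.
pose c n := iter n step J0.
have cS n : S (c n) by elim: n => //= n /stepP [].
have [n cn] := noetherian_chain_stationary noeth (fun n => SI _ (cS n))
  (fun n => (stepP _ (cS n)).2.1).
by have [_ [_ [r [cr ncr]]]] := stepP _ (cS n); apply: ncr; apply: cn.
Qed.

Lemma prime_ideal_avoiding_powers a x : noetherian_ring R -> ideal a ->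
  (forall n, ~ a (x ^+ n)) -> exists p, prime_ideal p /\ (forall r, a r -> p r) /\ ~ p x.
Proof.
move=> noeth ha ax.
pose S J := ideal J /\ (forall r, a r -> J r) /\ forall n, ~ J (x ^+ n).
have [J [[hJ [aJ xJ]] Jmax]] :=
  @noetherian_maximal S a noeth (fun J SJ => SJ.1) (conj ha (conj (fun r ar => ar) ax)).
have meets w : ~ J w -> exists n j r, J j /\ x ^+ n = j + r * w.
  move=> Jw; apply: NNPP => hno; apply: Jw.
  pose Jw y := exists j r, J j /\ y = j + r * w.
  have SJw : S Jw.
    split; first exact: ideal_add_principal.
    split=> [r ar | n [j [r [Jj e]]]]; last by apply: hno; exists n, j, r.
    by exists r, 0; rewrite mul0r addr0; split => //; apply: aJ.
  apply: (Jmax Jw SJw); first by move=> r Jr; exists r, 0; rewrite mul0r addr0.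
  by exists 0, 1; rewrite mul1r add0r; split => //; apply: ideal0.
exists J; split; last by split => // Jx; apply: (xJ 1%N); rewrite expr1.
split => //; split => [J1 | u v Juv]; first by apply: (xJ 0%N); rewrite expr0.
apply: NNPP => /not_or_and [Ju Jv].
have [n [j [r [Jj e]]]] := meets u Ju; have [m [j' [r' [Jj' e']]]] := meets v Jv.
apply: (xJ (n + m)%N); rewrite exprD e e'.
have -> : (j + r * u) * (j' + r' * v) = j * (j' + r' * v) + (r * u * j' + r * r' * (u * v))
  by ring.
by apply: (idealD hJ); [apply: idealMr | apply: (idealD hJ); apply: idealMl].
Qed.

Lemma noetherian_radical a x : noetherian_ring R -> ideal a ->
  (forall p, prime_ideal p -> (forall r, a r -> p r) -> p x) -> exists e, a (x ^+ e).
Proof.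
move=> noeth ha hx; apply: NNPP => hno.
have [p [pp [ap px]]] := prime_ideal_avoiding_powers noeth ha (fun n an => hno (ex_intro _ n an)).
exact: px (hx p pp ap).
Qed.

(* A product of k generators contains some s_i at least e_i times. *)
Lemma ideal_pow_sub_of_exprs I J (s : seq R) (e : nat -> nat) k :
  (forall x, I x -> exists c : seq R, x = \sum_(i < size s) c`_i * s`_i) ->
  ideal J -> (forall i, (i < size s)%N -> J (s`_i ^+ e i)) ->
  (\sum_(i < size s) e i < k + size s)%N ->
  forall y, ideal_pow I k y -> J y.
Proof.
move=> Igen; elim: k J e => [|k IH] J e hJ Je esum y.
  move=> _; have [i si ei0] : exists2 i, (i < size s)%N & e i = 0%N.
    apply: NNPP => hno; move: esum; apply/negP; rewrite -leqNgt add0n.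
    rewrite -[X in (X <= _)%N]card_ord -sum1_card; apply: leq_sum => j _.
    by case: (posnP (e j)) => // ej0; exfalso; apply: hno; exists j.
  by have := Je i si; rewrite ei0 expr0 => J1; rewrite -[y]mulr1; apply: idealMl.
move=> [l [lI ->]]; rewrite big_seq; apply: ideal_sum => // q /lI [Iq1 Jq2].
have [c ->] := Igen _ Iq1; rewrite mulr_suml; apply: ideal_sum => // i _.
rewrite -mulrA; apply: idealMl => //.
have [ei0 | ei_gt0] := posnP (e i).
  by have := Je i (ltn_ord i); rewrite ei0 expr0 => J1; rewrite -[_ * _]mulr1; apply: idealMl.
(* Peel off one factor s_i: pass to the ideal (J : s_i) and lower e_i by one. *)
pose e' j := if j == nat_of_ord i then (e i).-1 else e j.
apply: (IH (fun z => J (s`_i * z)) e') => //.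
- split; first by rewrite mulr0; apply: ideal0.
  split=> [a b Ja Jb | r a Ja]; first by rewrite mulrDr; apply: idealD.
  by rewrite mulrCA; apply: idealMl.
- move=> j sj; rewrite /e'; case: eqP => [-> | _]; last by apply: (idealMl _ hJ); apply: Je.
  by rewrite -exprS prednK //; apply: Je.
- rewrite (bigD1 i) //= in esum; rewrite (bigD1 i) //= /e' eqxx.
  rewrite (eq_bigr (fun j : 'I_(size s) => e j)) => [|j ji]; first lia.
  by rewrite ifF //; apply/negbTE; move: ji; apply: contra => /eqP /val_inj ->.
Qed.

End Ideals.

Section PrimeSubmodules.
Variables (R : comPzRingType) (M : lmodType R).
Implicit Types (L P : M -> Prop).

Lemma colon_ideal L : submodule L -> ideal (colon L).
Proof.
case=> [L0 [LD LZ]]; split; first by move=> m; rewrite scale0r.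
split=> [x y Lx Ly m | r x Lx m]; first by rewrite scalerDl; apply: LD.
by rewrite -scalerA; apply: LZ.
Qed.

Lemma colon_prime P : prime_submodule P -> prime_ideal (colon P).
Proof.
case=> subP [[m Pm] Pprime]; split; first exact: colon_ideal.
split=> [P1 | r s Prs]; first by apply: Pm; rewrite -[m]scale1r; apply: P1.
have [Pr | Pr] := classic (colon P r); [by left | right].
by move=> m'; have /Pprime [] : P (r *: (s *: m')) by rewrite scalerA; apply: Prs.
Qed.

Lemma notin_VsetE L P : prime_submodule P ->
  ~ Vset L P <-> exists r, colon L r /\ ~ colon P r.
Proof.
move=> hP; split=> [nV | [r [Lr Pr]] [_ LP]]; last exact: Pr (LP r Lr).
apply: NNPP => hno; apply: nV; split => // r Lr.
by apply: NNPP => Pr; apply: hno; exists r.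
Qed.

Lemma prime_ideal_is_colon q : faithful M -> primeful M ->
  (exists P, prime_submodule P) -> prime_ideal q ->
  exists P, prime_submodule P /\ forall r, colon P r <-> q r.
Proof.
move=> hf [M0 | hpf] [P0 [[P00 _] [[m Pm] _]]] qp; first by case: Pm; rewrite (M0 m).
by apply: hpf => // r /hf ->; apply: ideal0; case: qp.
Qed.

Lemma colon_radical a x : noetherian_ring R -> faithful M -> primeful M ->
  (exists P, prime_submodule P) -> ideal a ->
  (forall P, prime_submodule P -> (forall r, a r -> colon P r) -> colon P x) ->
  exists e, a (x ^+ e).
Proof.
move=> noeth hf hpf hspec ha hx; apply: noetherian_radical => // p pp ap.
have [P [hP Pp]] := prime_ideal_is_colon hf hpf hspec pp.
by apply/Pp; apply: hx => // r /ap /Pp.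
Qed.

End PrimeSubmodules.

Section Fractions.
Variables (R : comPzRingType) (N : lmodType R).
Implicit Types (u v w r s t : R) (a b m n : N) (x y z : N * R).

(* [loc_eq p x y] unfolds to [exists u, ~ p u /\ frac_eq u x y]. *)
Definition frac_eq u x y : Prop := u *: (y.2 *: x.1 - x.2 *: y.1) = 0.

Lemma frac_eq_sym u x y : frac_eq u x y -> frac_eq u y x.
Proof. by rewrite /frac_eq => h; rewrite -opprB scalerN h oppr0. Qed.

Lemma frac_eqMl v u x y : frac_eq u x y -> frac_eq (v * u) x y.
Proof. by rewrite /frac_eq -scalerA => ->; rewrite scaler0. Qed.

Lemma frac_eq_exprn_le w x y (i j : nat) :
  (i <= j)%N -> frac_eq (w ^+ i) x y -> frac_eq (w ^+ j) x y.
Proof. by move=> /subnK <- h; rewrite exprD; apply: frac_eqMl. Qed.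

Lemma frac_eq_trans u v x y z :
  frac_eq u x y -> frac_eq v y z -> frac_eq (u * v * y.2) x z.
Proof.
rewrite /frac_eq => uxy vyz.
have -> : (u * v * y.2) *: (z.2 *: x.1 - x.2 *: z.1) =
    (v * z.2) *: (u *: (y.2 *: x.1 - x.2 *: y.1)) +
    (u * x.2) *: (v *: (z.2 *: y.1 - y.2 *: z.1)).
  rewrite !scalerBr !scalerA addrA.
  have -> : v * z.2 * u * x.2 = u * x.2 * v * z.2 by ring.
  by rewrite subrK; congr (_ *: _ - _ *: _); ring.
by rewrite uxy vyz !scaler0 addr0.
Qed.

Lemma frac_eq_expand u r x b t : frac_eq u x (b, t) -> frac_eq u x (r *: b, r * t).
Proof.
rewrite /frac_eq /= => h.
have -> : u *: ((r * t) *: x.1 - x.2 *: (r *: b)) = r *: (u *: (t *: x.1 - x.2 *: b)).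
  by rewrite !scalerBr !scalerA; congr (_ *: _ - _ *: _); ring.
by rewrite h scaler0.
Qed.

Lemma frac_eqZ u r a s b t : frac_eq u (a, s) (b, t) -> frac_eq u (r *: a, s) (r *: b, t).
Proof.
rewrite /frac_eq /= => h.
have -> : u *: (t *: (r *: a) - s *: (r *: b)) = r *: (u *: (t *: a - s *: b)).
  by rewrite !scalerBr !scalerA; congr (_ *: _ - _ *: _); ring.
by rewrite h scaler0.
Qed.

Lemma frac_eqD u v a b m n s t : frac_eq u (a, s) (m, t) -> frac_eq v (b, s) (n, t) ->
  frac_eq (u * v) (a + b, s) (m + n, t).
Proof.
move=> /(frac_eqMl v) hu /(frac_eqMl u) hv; rewrite /frac_eq /= in hu hv *.
by rewrite (scalerDr t) (scalerDr s) opprD addrACA scalerDr [u * v]mulrC hu [v * u]mulrC hv addr0.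
Qed.

Lemma ann_ideal b : ideal (fun r => r *: b = 0).
Proof.
split; first by rewrite scale0r.
split=> [r s rb sb | r s sb]; first by rewrite scalerDl rb sb addr0.
by rewrite -scalerA sb scaler0.
Qed.

End Fractions.

Section SectionsOutsideV.
Variables (R : comPzRingType) (M N : lmodType R).
Hypotheses (noeth : noetherian_ring R) (hfaith : faithful M) (hprimeful : primeful M)
  (hspec : exists P : M -> Prop, prime_submodule P).
Variables (I : R -> Prop) (U : (M -> Prop) -> Prop).
Hypotheses (hI : ideal I)
  (hUE : forall P, U P <-> prime_submodule P /\ exists r, I r /\ ~ colon P r).

Let radical a x := @colon_radical R M a x noeth hfaith hprimeful hspec.

Lemma U_prime P : U P -> prime_submodule P.
Proof. by case/hUE. Qed.

Lemma U_of_notin P r : prime_submodule P -> I r -> ~ colon P r -> U P.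
Proof. by move=> hP Ir Pr; apply/hUE; split => //; exists r. Qed.

Lemma spec_quasi_compact (T : eqType) (D : T -> Prop) (den : T -> R) :
  (forall P, U P -> exists t, D t /\ ~ colon P (den t)) ->
  exists l : seq T, (forall t, t \in l -> D t) /\
    forall P, U P -> exists2 t, t \in l & ~ colon P (den t).
Proof.
move=> cov; have [s hs] := noeth hI.
pose covers (y : R) (l : seq T) := forall P : M -> Prop, prime_submodule P -> ~ colon P y ->
  exists2 t, t \in l & ~ colon P (den t).
have covers_gen y : y \in s -> exists l, (forall t, t \in l -> D t) /\ covers y l.
  move=> ys; have [e [l [lD ye]]] : exists e, ideal_span D den (y ^+ e).
    apply: radical (ideal_span_ideal D den) _ => P hP Pspan; apply: NNPP => Py.
    have [t [Dt Pt]] := cov P (U_of_notin hP (fin_gen_ideal_mem hs ys) Py).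
    exact/Pt/Pspan/ideal_span_mem.
  exists [seq t.2 | t <- l]; split => [_ /mapP [t /lD ? ->] // | P hP Py].
  have pP := colon_prime hP.
  have := prime_ideal_notX (n := e) pP Py.
  rewrite ye => /(ideal_sum_notin pP.1) [t tl Pt].
  by exists t.2; [rewrite map_f | move=> Pt2; apply/Pt/(idealMl _ pP.1)].
have covers_mono y l l' : {subset l <= l'} -> covers y l -> covers y l'.
  by move=> ll' cl P hP Py; have [t tl Pt] := cl P hP Py; exists t => //; apply: ll'.
have [l [lD lcov]] := exists_common_list covers_mono covers_gen.
exists l; split => // P /hUE [hP [r [Ir Pr]]].
have colon_ideal := (colon_prime hP).1.
have [c [_ rE]] := (hs r).1 Ir; move: Pr; rewrite rE.
move=> /(ideal_sum_notin colon_ideal) [i _ Pi].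
apply: (lcov s`_i (mem_nth 0 (ltn_ord i)) P hP) => Psi.
exact/Pi/(idealMl _ colon_ideal).
Qed.

Variable g : (R -> Prop) -> N * R.
Hypothesis hg : A_section U g.

Lemma den_notin P : U P -> ~ colon P (g (colon P)).2.
Proof. by move=> UP; apply: hg.1; exists P. Qed.

Definition local_fraction (F : R) (G : N) : Prop :=
  (forall P, prime_submodule P -> ~ colon P F -> U P) /\
  (forall P, U P -> ~ colon P F -> loc_eq (colon P) (g (colon P)) (G, F)).

Lemma local_fraction_exists Q : U Q -> exists F G, local_fraction F G /\ ~ colon Q F.
Proof.
move=> UQ; have [W [[_ [L [_ WE]]] [WU [WQ [s [m Wsm]]]]]] := hg.2 Q UQ.
have [w [Lw Qw]] : exists w, colon L w /\ ~ colon Q w.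
  by case/WE: WQ => hQ /(notin_VsetE _ hQ).
have Wof P : prime_submodule P -> ~ colon P w -> W P.
  by move=> hP Pw; apply/WE; split => //; apply/(notin_VsetE _ hP); exists w.
(* On D(w) the section is m/s, so a power of w lies in Rs; then F := w^(e+1)
   is a multiple of s with D(F) inside D(w). *)
have [e [c wec]] : exists e c, w ^+ e = c * s.
  apply: radical (ideal_principal s) _ => P hP sP; apply: NNPP => Pw.
  by apply: (Wsm P (Wof P hP Pw)).1; apply: sP; exists 1; rewrite mul1r.
have Dw (P : M -> Prop) : prime_submodule P -> ~ colon P (w ^+ e.+1) -> ~ colon P w.
  by move=> hP Pwe Pw; apply: Pwe; rewrite exprSr; apply: idealMl (colon_prime hP).1 Pw.
exists (w ^+ e.+1), ((w * c) *: m); split; last first.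
  exact: prime_ideal_notX (colon_prime (U_prime UQ)) Qw.
split=> [P hP Pwe | P UP Pwe]; first exact/WU/Wof/Dw.
have [_ [u [Pu hu]]] := Wsm P (Wof P (U_prime UP) (Dw P (U_prime UP) Pwe)).
by exists u; split => //; rewrite exprS wec mulrA; apply: frac_eq_expand.
Qed.

Lemma local_fractions_cover : exists L : seq (R * N),
  (forall t, t \in L -> local_fraction t.1 t.2) /\
  forall P, U P -> exists2 t, t \in L & ~ colon P t.1.
Proof.
apply: (@spec_quasi_compact (R * N)%type (fun t => local_fraction t.1 t.2) fst) => P UP.
by have [F [G [FG PF]]] := local_fraction_exists UP; exists (F, G).
Qed.

Lemma local_fractions_compatible F1 G1 F2 G2 :
  local_fraction F1 G1 -> local_fraction F2 G2 ->
  exists e, frac_eq ((F1 * F2) ^+ e) (G1, F1) (G2, F2).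
Proof.
move=> [D1 frac1] [_ frac2].
(* A prime in D(F1 F2) lies in U, where both fractions equal g. *)
apply: radical (ann_ideal _) _ => P hP ann; apply: NNPP => PF.
have pP := colon_prime hP.
have PF1 : ~ colon P F1 by move=> P1; apply: PF; apply: idealMr pP.1 P1.
have PF2 : ~ colon P F2 by move=> P2; apply: PF; apply: idealMl pP.1 P2.
have UP := D1 P hP PF1.
have [u1 [Pu1 e1]] := frac1 P UP PF1; have [u2 [Pu2 e2]] := frac2 P UP PF2.
apply: (prime_ideal_notM pP (prime_ideal_notM pP Pu1 Pu2) (den_notin UP)).
exact/ann/(frac_eq_trans (frac_eq_sym e1) e2).
Qed.

Lemma in_image_eps_ideal : ideal (fun r => in_image_eps U (fam_scale r g)).
Proof.
split.
  exists 0 => _ [P [UP ->]]; exists 1; split; first by case: (colon_prime (U_prime UP)) => _ [].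
  by rewrite /frac_eq /= scale0r !scaler0 subrr scaler0.
split=> [x y [n xn] [n' yn] | r x [n xn]].
  exists (n + n') => _ [P [UP ->]]; have SP : Supp U (colon P) by exists P.
  have [u [pu hu]] := xn _ SP; have [u' [pu' hu']] := yn _ SP.
  exists (u * u'); split; first exact: prime_ideal_notM (colon_prime (U_prime UP)) pu pu'.
  by move: (frac_eqD hu hu'); rewrite /= scalerDl.
exists (r *: n) => p /xn [u [pu hu]]; exists u; split => //.
by move: (frac_eqZ r hu); rewrite /= scalerA mulrC -scalerA.
Qed.

Lemma cover_in_image_eps F G C (L : seq (R * N)) :
  (forall t, t \in L -> local_fraction t.1 t.2) ->
  (forall P, U P -> exists2 t, t \in L & ~ colon P t.1) ->
  (forall t, t \in L -> frac_eq ((F * t.1) ^+ C) (G, F) (t.2, t.1)) ->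
  in_image_eps U (fam_scale (F ^+ C.+1) g).
Proof.
move=> Lfrac Lcov FL; exists (F ^+ C *: G) => _ [P [UP ->]].
(* Near P, (F^C G)/F^(C+1) = G'/F' = g for a member (G', F') of the cover. *)
have [[F' G'] tL PF'] := Lcov P UP.
have [u [Pu hu]] := (Lfrac _ tL).2 P UP PF'.
have hc : frac_eq (F' ^+ C) (F ^+ C *: G, F ^+ C.+1) (G', F').
  rewrite /frac_eq /=; apply: etrans (FL _ tL); rewrite /= !scalerBr !scalerA exprMn exprS.
  by congr (_ *: _ - _ *: _); ring.
have pP := colon_prime (U_prime UP).
exists (F' ^+ C * u * F'); split.
  by apply: prime_ideal_notM => //; apply: prime_ideal_notM => //; apply: prime_ideal_notX.
by have := frac_eq_sym (frac_eq_trans hc (frac_eq_sym hu)); rewrite /frac_eq /= scale1r.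
Qed.

Lemma in_image_eps_torsion :
  exists k, forall r, ideal_pow I k r -> in_image_eps U (fam_scale r g).
Proof.
have [L [Lfrac Lcov]] := local_fractions_cover.
have [C hC] : exists C, forall t, t \in L -> forall t', t' \in L ->
    frac_eq ((t.1 * t'.1) ^+ C) (t.2, t.1) (t'.2, t'.1).
  apply: (@exists_uniform_bound _ (fun C t => forall t', t' \in L ->
    frac_eq ((t.1 * t'.1) ^+ C) (t.2, t.1) (t'.2, t'.1))) => [n m t nm h t' t'L | t tL].
    exact: frac_eq_exprn_le nm (h t' t'L).
  apply: exists_uniform_bound => [n m t' nm | t' t'L]; first exact: frac_eq_exprn_le.
  exact: local_fractions_compatible (Lfrac t tL) (Lfrac t' t'L).
have LJ t : t \in L -> in_image_eps U (fam_scale (t.1 ^+ C.+1) g).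
  by move=> tL; apply: (cover_in_image_eps Lfrac Lcov) => t' t'L; apply: hC.
have [s hs] := noeth hI.
have [E sE] : exists E, forall y, y \in s -> in_image_eps U (fam_scale (y ^+ E) g).
  apply: exists_uniform_bound => [n m y nm | y ys].
    exact: ideal_exprn_le in_image_eps_ideal nm.
  apply: radical in_image_eps_ideal _ => P hP JP; apply: NNPP => Py.
  have [t tL Pt] := Lcov P (U_of_notin hP (fin_gen_ideal_mem hs ys) Py).
  exact: prime_ideal_notX (colon_prime hP) Pt (JP _ (LJ t tL)).
exists (size s * E).+1.
apply: (@ideal_pow_sub_of_exprs _ I _ s (fun=> E)) in_image_eps_ideal _ _.
- by move=> x /hs [c [_ ->]]; exists c.
- by move=> i si; apply: sE; apply: mem_nth.
- by rewrite sum_nat_const card_ord; lia.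
Qed.

End SectionsOutsideV.

Theorem proposition3p11 (R : comPzRingType) (M N : lmodType R) (K : M -> Prop) :
  noetherian_ring R ->
  faithful M -> primeful M -> (exists P : M -> Prop, prime_submodule P) ->
  submodule K ->
  coker_eps_torsion N (colon K)
    (fun P => prime_submodule P /\ ~ Vset K P).
Proof.
move=> noeth hf hpf hspec hK g hg.
apply: (in_image_eps_torsion noeth hf hpf hspec (colon_ideal hK) _ hg) => P.
by split=> [[hP /(notin_VsetE _ hP)] | [hP /(notin_VsetE _ hP)]].
Qed.
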